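(* For all integers $k\ge 3$ and $n\ge 1$, the cycle chain $\mathcal{C}_k^n$ is odd prime.
   Context: All graphs are finite and simple. A graph $G$ of order $N$ is odd prime if there is a bijection $\ell:V(G)\to\{1,3,\ldots,2N-1\}$ with $\gcd(\ell(u),\ell(v))=1$ for every edge $uv$. The cycle chain $\mathcal{C}_k^n$ has vertices $v_1,\ldots,v_{n+1}$ and, for each $i=1,\ldots,n$, two internally disjoint paths joining $v_i$ to $v_{i+1}$ (with all internal vertices new and distinct): if $k$ is even, the paths $v_i,w_{i,1},\ldots,w_{i,k/2-1},v_{i+1}$ and $v_i,x_{i,1},\ldots,x_{i,k/2-1},v_{i+1}$; if $k$ is odd, the paths $v_i,w_{i,1},\ldots,w_{i,(k-1)/2-1},v_{i+1}$ and $v_i,x_{i,1},\ldots,x_{i,(k-1)/2},v_{i+1}$. Thus it is a chain of $n$ cycles of length $k$, consecutive cycles sharing the single vertex $v_{i+1}$. *)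

From mathcomp Require Import all_boot.
Set Implicit Arguments. Unset Strict Implicit. Unset Printing Implicit Defensive.

Definition odd_prime (V : finType) (e : rel V) : Prop :=
  exists l : V -> nat,
    [/\ injective l,
        (forall v, odd (l v) && (l v < 2 * #|V|)),
        (forall m, odd m -> m < 2 * #|V| -> exists v, l v = m)
      & (forall u v, e u v -> coprime (l u) (l v))].

Definition consec (T : eqType) (s : seq T) (u v : T) : bool :=
  ((u, v) \in zip s (behead s)) || ((v, u) \in zip s (behead s)).

(* Number of internal vertices on the w-path and on the x-path. *)
Definition na (k : nat) : nat := (k - 2)./2.
Definition nb (k : nat) : nat := (k - 2) - na k.

(* Vertices: v_0..v_n, w_{i,j} (i<n, j<na k), x_{i,j} (i<n, j<nb k). *)
Definition cc_vert (k n : nat) : finType :=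
  ('I_n.+1 + ('I_n * 'I_(na k)) + ('I_n * 'I_(nb k)))%type.

Definition cvV (k n : nat) (i : 'I_n.+1) : cc_vert k n := inl (inl i).
Definition cvW (k n : nat) (i : 'I_n) (j : 'I_(na k)) : cc_vert k n :=
  inl (inr (i, j)).
Definition cvX (k n : nat) (i : 'I_n) (j : 'I_(nb k)) : cc_vert k n :=
  inr (i, j).

Definition wpath (k n : nat) (i : 'I_n) : seq (cc_vert k n) :=
  cvV k (widen_ord (leqnSn n) i)
    :: rcons [seq cvW i j | j <- enum 'I_(na k)] (cvV k (lift ord0 i)).
Definition xpath (k n : nat) (i : 'I_n) : seq (cc_vert k n) :=
  cvV k (widen_ord (leqnSn n) i)
    :: rcons [seq cvX i j | j <- enum 'I_(nb k)] (cvV k (lift ord0 i)).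

Definition cc_edge (k n : nat) : rel (cc_vert k n) :=
  fun u v => [exists i : 'I_n, consec (wpath k i) u v || consec (xpath k i) u v].

(* Number the vertices block by block: v_i gets position i(k-1), and the
   internal vertices of the i-th cycle get positions i(k-1)+1, ..., i(k-1)+k-2,
   the x-path taking the odd offsets and the w-path the even ones.  This is a
   bijection onto [0, n(k-1)], and along either path consecutive positions
   differ by 1 or 2.  Labelling a vertex at position p by 2p+1 therefore gives
   adjacent vertices odd labels a and a + 2^d with d in {1, 2}, which are
   coprime. *)

From mathcomp Require Import all_boot.
From mathcomp Require Import zify.

Definition step12 (x y : nat) : bool := x < y <= x.+2.

Lemma coprime_addn_pow2 a m : odd a -> coprime a (a + 2 ^ m).
Proof.
move=> odd_a; rewrite /coprime gcdnDl -/(coprime a _).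
by apply: coprimeXr; rewrite coprimen2.
Qed.

Lemma coprime_double_step12 x y : step12 x y -> coprime x.*2.+1 y.*2.+1.
Proof.
move=> xy; have odd_x : odd x.*2.+1 by rewrite /= odd_double.
have [->|->] : y = x.+1 \/ y = x.+2 by move: xy; rewrite /step12; lia.
- have -> : (x.+1).*2.+1 = x.*2.+1 + 2 ^ 1 by rewrite expn1; lia.
  exact: coprime_addn_pow2.
- have -> : (x.+2).*2.+1 = x.*2.+1 + 2 ^ 2 by rewrite expnS expn1; lia.
  exact: coprime_addn_pow2.
Qed.

Lemma odd_prime_of_step12_ranking (V : finType) (e : rel V) (r : V -> nat) :
    injective r -> (forall v, r v < #|V|) ->
    (forall u v, e u v -> step12 (r u) (r v) || step12 (r v) (r u)) ->
  odd_prime e.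
Proof.
move=> r_inj r_lt r_edge; exists (fun v => (r v).*2.+1); split.
- by move=> u v [/double_inj/r_inj].
- by move=> v; rewrite /= odd_double mul2n ltn_Sdouble r_lt.
- move=> m odd_m lt_m.
  pose r' v : 'I_#|V| := Ordinal (r_lt v).
  have r'_inj : injective r' by move=> u v [/r_inj].
  have half_m_lt : m./2 < #|V| by rewrite ltn_half_double -mul2n.
  have /codomP[v /(congr1 val)/= half_m] :=
    inj_card_onto r'_inj (eq_leq (card_ord _)) (Ordinal half_m_lt).
  by exists v; rewrite -half_m; have := odd_double_half m; rewrite odd_m; lia.
- move=> u v /r_edge/orP[]/coprime_double_step12 //.
  by rewrite coprime_sym.
Qed.

Lemma consec_path (T : eqType) (e : rel T) x s u v :
  path e x s -> consec (x :: s) u v -> e u v || e v u.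
Proof.
move=> path_xs.
have in_zip_path a b : (a, b) \in zip (x :: s) s -> e a b.
  elim: s x path_xs => [|z t IHt] y //= /andP[e_yz path_zt].
  by rewrite in_cons => /orP[/eqP[-> ->] // | /(IHt _ path_zt)].
by case/orP=> /in_zip_path ->; rewrite ?orbT.
Qed.

Lemma traject_addn d x m : traject (addn d) x m = [seq x + d * j | j <- iota 0 m].
Proof.
apply: (eq_from_nth (x0 := x)); rewrite size_traject ?size_map ?size_iota //.
move=> j lt_jm; rewrite nth_traject // (nth_map 0) ?size_iota // nth_iota //.
by rewrite iter_addn addnC.
Qed.

Lemma path_step12_traject x m z :
  step12 (x + m.*2) z -> path step12 x (rcons (traject (addn 2) x.+2 m) z).
Proof.
move=> last_step; rewrite rcons_path last_traject iter_addn.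
rewrite (sub_path _ (fpath_traject (addn 2) x m)); last first.
  by move=> a b /eqP <-; rewrite /step12; lia.
by have -> : 2 * m + x = x + m.*2 by lia.
Qed.

Section CycleChain.

Variables k n : nat.
Hypothesis k_ge3 : 3 <= k.

Lemma na_double : (na k).*2 + odd k = k - 2.
Proof.
have := odd_double_half (k - 2); rewrite oddB ?addbF; last by lia.
by rewrite /na addnC.
Qed.

Lemma nb_eq : nb k = na k + odd k.
Proof. by rewrite /nb; have := na_double; lia. Qed.

Definition cc_block (v : cc_vert k n) : nat :=
  match v with inl (inl i) => i | inl (inr (i, _)) => i | inr (i, _) => i end.

Definition cc_offset (v : cc_vert k n) : nat :=
  match v with
  | inl (inl _) => 0
  | inl (inr (_, j)) => (j.+1).*2
  | inr (_, j) => j.*2.+1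
  end.

Definition cc_pos (v : cc_vert k n) : nat := cc_block v * (k - 1) + cc_offset v.

Lemma cc_offset_lt v : cc_offset v < k - 1.
Proof.
have := na_double; have := nb_eq.
by case: v => [[i|[i j]]|[i j]] /=; try have := ltn_ord j; lia.
Qed.

Lemma cc_pos_inj : injective cc_pos.
Proof.
have k1_gt0 : 0 < k - 1 by lia.
have pos_div v : cc_pos v %/ (k - 1) = cc_block v.
  by rewrite divnMDl // divn_small ?cc_offset_lt ?addn0.
have pos_mod v : cc_pos v %% (k - 1) = cc_offset v.
  by rewrite modnMDl modn_small ?cc_offset_lt.
move=> u v eq_pos.
have := pos_div u; have := pos_mod u; rewrite eq_pos pos_div pos_mod.
case: u {eq_pos} => [[i|[i j]]|[i j]]; case: v => [[i'|[i' j']]|[i' j']] /=;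
  move=> eq_off eq_blk; try lia;
  rewrite (ord_inj eq_blk) //; have eq_j : j = j' :> nat by lia.
all: by rewrite (ord_inj eq_j).
Qed.

Lemma card_cc_vert : #|cc_vert k n| = n * (k - 1) + 1.
Proof.
rewrite !card_sum !card_prod !card_ord.
by have := na_double; have := nb_eq; nia.
Qed.

Lemma cc_pos_lt_card v : cc_pos v < #|cc_vert k n|.
Proof.
rewrite card_cc_vert /cc_pos; move: (cc_offset_lt v).
by case: v => [[i|[i j]]|[i j]] /=; have := ltn_ord i; nia.
Qed.

Lemma map_cc_pos_enum m (f : 'I_m -> cc_vert k n) c :
    (forall j, cc_pos (f j) = c + 2 * j) ->
  [seq cc_pos (f j) | j <- enum 'I_m] = traject (addn 2) c m.
Proof.
move=> pos_f; rewrite traject_addn -val_enum_ord -map_comp.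
by apply: eq_map => j; rewrite /= pos_f.
Qed.

Lemma wpath_step12 (i : 'I_n) :
  path (relpre cc_pos step12) (cvV k (widen_ord (leqnSn n) i))
       (behead (wpath k i)).
Proof.
rewrite -path_map /= map_rcons -map_comp.
rewrite (@map_cc_pos_enum _ _ (i * (k - 1)).+2); last first.
  by move=> j; rewrite /cc_pos /=; lia.
rewrite /cc_pos /= !addn0 (_ : bump 0 i = i.+1) //; apply: path_step12_traject.
by rewrite /step12; have := na_double; lia.
Qed.

Lemma xpath_step12 (i : 'I_n) :
  path (relpre cc_pos step12) (cvV k (widen_ord (leqnSn n) i))
       (behead (xpath k i)).
Proof.
rewrite -path_map /= map_rcons -map_comp.
rewrite (@map_cc_pos_enum _ _ (i * (k - 1)).+1); last first.
  by move=> j; rewrite /cc_pos /=; lia.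
have nb_gt0 : 0 < nb k by have := na_double; have := nb_eq; lia.
rewrite /cc_pos /= !addn0 (_ : bump 0 i = i.+1) // -(prednK nb_gt0) /=.
apply/andP; split; first by rewrite /step12; lia.
apply: path_step12_traject.
by rewrite /step12; have := na_double; have := nb_eq; lia.
Qed.

Lemma cc_edge_step12 u v : cc_edge u v ->
  step12 (cc_pos u) (cc_pos v) || step12 (cc_pos v) (cc_pos u).
Proof.
case/existsP=> i /orP[].
- exact: consec_path (wpath_step12 i).
- exact: consec_path (xpath_step12 i).
Qed.

End CycleChain.

Theorem theorem3p3 (k n : nat) (hk : 3 <= k) (hn : 1 <= n) :
  odd_prime (@cc_edge k n).
Proof.
apply: (@odd_prime_of_step12_ranking _ _ (@cc_pos k n)).
- exact: cc_pos_inj.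
- exact: cc_pos_lt_card.
- exact: cc_edge_step12.
Qed.
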